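(* Let $L$ be a primitive $\mathbb{Z}_2$-lattice of rank at least $4$. If $L$ is of type A, then $B(\mathbf x,\mathbf y)\in 2^{\nu_2(L)-2}\mathbb{Z}_2$ for all $\mathbf x,\mathbf y\in L$ with $\mathrm{ord}_2(Q(\mathbf x))=\mathrm{ord}_2(Q(\mathbf y))=\nu_2(L)$.
   Context: A $\mathbb{Z}_2$-lattice is a free $\mathbb{Z}_2$-module of finite rank with a non-degenerate symmetric bilinear form $B$ with values in $\mathbb{Z}_2$; $Q(\mathbf x)=B(\mathbf x,\mathbf x)$. Scale $\mathfrak sL$ = ideal generated by all $B(\mathbf x,\mathbf y)$; norm $\mathfrak nL$ = ideal generated by all $Q(\mathbf x)$; primitive means $\mathfrak sL=\mathbb{Z}_2$. Let $SC_2=\{1,3,5,7,2,6,10,14\}$. For $L$ of rank $\ge4$ and $s\in SC_2$, let $u\ge0$ be least with $s4^u=Q(\mathbf x)$ for some $\mathbf x\in L$; $\nu_{2,s}(L)=\mathrm{ord}_2(s4^u)$; $\nu_2(L)=\max_s\nu_{2,s}(L)$. A primitive $\mathbb{Z}_2$-lattice $L$ of rank $\ge4$ is of type A if there is a Jordan decomposition $L=\ell_1\perp\cdots\perp\ell_k$ with $\mathbb{Z}_2=\mathfrak s(\ell_1)\supsetneq\cdots\supsetneq\mathfrak s(\ell_k)$ and a positive integer $t$ such that $\ell_1\perp\cdots\perp\ell_{t-1}$ is an anisotropic ternary $\mathbb{Z}_2$-lattice and $\mathfrak n\ell_t\subseteq 8\,\mathfrak s\ell_{t-1}$. *)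

(* The ring Z_2 of 2-adic integers is constructed here as the
   inverse limit of the rings Z/2^k Z (coherent sequences of canonical residues). *)
From HB Require Import structures.
From mathcomp Require Import all_boot all_order all_algebra.
From mathcomp Require Import boolp zify.

Set Implicit Arguments.
Unset Strict Implicit.
Unset Printing Implicit Defensive.
Import GRing.Theory.

Definition coherent (f : nat -> nat) : Prop :=
  forall k, f k < 2 ^ k /\ f k.+1 %% 2 ^ k = f k.

Record Z2 := MkZ2 { z2seq : nat -> nat ; z2coh : coherent z2seq }.

HB.instance Definition _ := gen_eqMixin Z2.
HB.instance Definition _ := gen_choiceMixin Z2.

Lemma Z2_inj (a b : Z2) : z2seq a = z2seq b -> a = b.
Proof.
case: a b => [f hf] [g hg] /= efg; subst g.
by rewrite (Prop_irrelevance hf hg).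
Qed.

Lemma Z2_ext (a b : Z2) : (forall k, z2seq a k = z2seq b k) -> a = b.
Proof. by move=> h; apply: Z2_inj; apply: funext. Qed.

Lemma z2lt (a : Z2) k : z2seq a k < 2 ^ k.
Proof. by case: (z2coh a k). Qed.

Lemma z2mod (a : Z2) k : z2seq a k.+1 %% 2 ^ k = z2seq a k.
Proof. by case: (z2coh a k). Qed.

Lemma dvd2S k : 2 ^ k %| 2 ^ k.+1.
Proof. by rewrite expnS dvdn_mull. Qed.

Lemma expn2_gt0 k : 0 < 2 ^ k.
Proof. by rewrite expn_gt0. Qed.

Lemma coh_lift (g : nat -> nat) :
  (forall k, g k.+1 %% 2 ^ k = g k %% 2 ^ k) ->
  coherent (fun k => g k %% 2 ^ k).
Proof.
move=> h k; split; first by rewrite ltn_mod expn2_gt0.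
by rewrite modn_dvdm ?dvd2S // h.
Qed.

Definition z2zero : Z2 := MkZ2 (coh_lift (g := fun _ => 0) (fun k => erefl)).

Lemma add_coh (a b : Z2) :
  forall k, (z2seq a k.+1 + z2seq b k.+1) %% 2 ^ k
            = (z2seq a k + z2seq b k) %% 2 ^ k.
Proof. by move=> k; rewrite -modnDm !z2mod. Qed.

Definition z2add (a b : Z2) : Z2 := MkZ2 (coh_lift (add_coh a b)).

Lemma mul_coh (a b : Z2) :
  forall k, (z2seq a k.+1 * z2seq b k.+1) %% 2 ^ k
            = (z2seq a k * z2seq b k) %% 2 ^ k.
Proof. by move=> k; rewrite -modnMm !z2mod. Qed.

Definition z2mul (a b : Z2) : Z2 := MkZ2 (coh_lift (mul_coh a b)).

Lemma one_coh : forall k, 1 %% 2 ^ k = 1 %% 2 ^ k.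
Proof. by []. Qed.

Definition z2one : Z2 := MkZ2 (coh_lift (g := fun _ => 1) one_coh).

Lemma opp_coh (a : Z2) :
  forall k, (2 ^ k.+1 - z2seq a k.+1) %% 2 ^ k = (2 ^ k - z2seq a k) %% 2 ^ k.
Proof.
move=> k; rewrite -(z2mod a k).
set p := 2 ^ k; set x := z2seq a k.+1.
have hx : x < 2 * p by rewrite /x /p -expnS z2lt.
have hp : 0 < p by rewrite /p expn2_gt0.
rewrite expnS -/p.
have [lt_xp | le_px] := ltnP x p.
  rewrite (modn_small lt_xp) mul2n -addnn -addnBA; last exact: ltnW.
  by rewrite modnDl.
have -> : x %% p = x - p.
  by rewrite -{1}(subnK le_px) modnDr modn_small // ltn_subLR // addnn -mul2n.
congr (_ %% _); lia.
Qed.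

Definition z2opp (a : Z2) : Z2 := MkZ2 (coh_lift (opp_coh a)).

Lemma z2addA : associative z2add.
Proof.
by move=> a b c; apply: Z2_ext => k /=; rewrite modnDml modnDmr addnA.
Qed.

Lemma z2addC : commutative z2add.
Proof. by move=> a b; apply: Z2_ext => k /=; rewrite addnC. Qed.

Lemma z2add0 : left_id z2zero z2add.
Proof. by move=> a; apply: Z2_ext => k /=; rewrite mod0n add0n modn_small ?z2lt. Qed.

Lemma z2addN : left_inverse z2zero z2opp z2add.
Proof.
move=> a; apply: Z2_ext => k /=.
by rewrite modnDml subnK ?modnn ?mod0n // ltnW ?z2lt.
Qed.

HB.instance Definition _ :=
  GRing.isZmodule.Build Z2 z2addA z2addC z2add0 z2addN.

Lemma z2mulA : associative z2mul.
Proof.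
by move=> a b c; apply: Z2_ext => k /=; rewrite modnMml modnMmr mulnA.
Qed.

Lemma z2mulC : commutative z2mul.
Proof. by move=> a b; apply: Z2_ext => k /=; rewrite mulnC. Qed.

Lemma z2mul1 : left_id z2one z2mul.
Proof. by move=> a; apply: Z2_ext => k /=; rewrite modnMml mul1n modn_small ?z2lt. Qed.

Lemma z2mulDl : left_distributive z2mul z2add.
Proof.
by move=> a b c; apply: Z2_ext => k /=; rewrite modnMml mulnDl modnDm.
Qed.

Lemma z2one_neq0 : z2one != z2zero.
Proof.
apply/eqP => /(f_equal (fun a => z2seq a 1)) /=.
by [].
Qed.

HB.instance Definition _ :=
  GRing.Zmodule_isComNzRing.Build Z2 z2mulA z2mulC z2mul1 z2mulDl z2one_neq0.

(** A Z_2-lattice of rank n is modelled, through a fixed basis, as the free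
   module 'rV[Z2]_n with bilinear form B(x,y) = x G y^T, for a symmetric Gram
   matrix G : 'M[Z2]_n. *)

Local Open Scope ring_scope.

Definition bform n (G : 'M[Z2]_n) (x y : 'rV[Z2]_n) : Z2 := (x *m G *m y^T) 0 0.

Definition qform n (G : 'M[Z2]_n) (x : 'rV[Z2]_n) : Z2 := bform G x x.

Definition nondeg_form n (G : 'M[Z2]_n) : Prop :=
  forall x : 'rV[Z2]_n, (forall y, bform G x y = 0) -> x = 0.

Definition ideal_gen (S : Z2 -> Prop) (a : Z2) : Prop :=
  exists (m : nat) (c s : 'I_m -> Z2),
    (forall i, S (s i)) /\ a = \sum_(i < m) c i * s i.

Definition ideal_sub (I J : Z2 -> Prop) : Prop := forall a, I a -> J a.
Definition ideal_eq (I J : Z2 -> Prop) : Prop := forall a, I a <-> J a.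
Definition ideal_ssub (I J : Z2 -> Prop) : Prop :=
  ideal_sub I J /\ ~ ideal_sub J I.
Definition whole_Z2 : Z2 -> Prop := fun _ => True.

Definition ideal_scale (c : Z2) (I : Z2 -> Prop) (a : Z2) : Prop :=
  exists b, I b /\ a = c * b.

Definition in2pow (m : nat) (a : Z2) : Prop := exists b : Z2, a = (2 ^ m)%N%:R * b.

Definition has_ord2 (a : Z2) (m : nat) : Prop := in2pow m a /\ ~ in2pow m.+1 a.

Definition scale_of n (G : 'M[Z2]_n) (V : 'rV[Z2]_n -> Prop) : Z2 -> Prop :=
  ideal_gen (fun a => exists x y, [/\ V x, V y & a = bform G x y]).

Definition norm_of n (G : 'M[Z2]_n) (V : 'rV[Z2]_n -> Prop) : Z2 -> Prop :=
  ideal_gen (fun a => exists x, V x /\ a = qform G x).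

Definition wholeL n : 'rV[Z2]_n -> Prop := fun _ => True.

Definition primitive_lat n (G : 'M[Z2]_n) : Prop :=
  ideal_eq (scale_of G (@wholeL n)) whole_Z2.

Definition is_basis n (E : 'M[Z2]_n) : Prop :=
  exists F : 'M[Z2]_n, F *m E = 1%:M /\ E *m F = 1%:M.

Definition span_of n (E : 'M[Z2]_n) (P : pred 'I_n) (x : 'rV[Z2]_n) : Prop :=
  exists c : 'rV[Z2]_n, (forall a, ~~ P a -> c 0 a = 0) /\ x = c *m E.

Definition modular_block n (G : 'M[Z2]_n) (E : 'M[Z2]_n) (P : pred 'I_n) : Prop :=
  exists (r : nat) (U : 'M[Z2]_#|P|),
    (exists M : 'M[Z2]_#|P|, M *m U = 1%:M /\ U *m M = 1%:M) /\
    forall p q : 'I_#|P|,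
      bform G (row (enum_val p) E) (row (enum_val q) E) = (2 ^ r)%N%:R * U p q.

(* the i-th Jordan jcomp (0-based: jcomp i is l_{i+1} of the paper) *)
Definition jcomp n (E : 'M[Z2]_n) (blk : 'I_n -> nat) (i : nat) :=
  span_of E [pred a | blk a == i].

(* L = l_1 _|_ ... _|_ l_k is a Jordan decomposition with
   Z_2 = s l_1 ⊋ s l_2 ⊋ ... ⊋ s l_k.  The basis E is adapted to the splitting:
   l_{i+1} is spanned by the rows row a E with blk a = i. *)
Definition jordan_decomp n (G : 'M[Z2]_n) (E : 'M[Z2]_n) (k : nat)
    (blk : 'I_n -> nat) : Prop :=
  [/\ is_basis E,
      (forall a, (blk a < k)%N) /\ (forall i, (i < k)%N -> exists a, blk a = i),
      forall a b, blk a != blk b -> bform G (row a E) (row b E) = 0,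
      forall i, (i < k)%N -> modular_block G E [pred a | blk a == i] &
      ideal_eq (scale_of G (jcomp E blk 0)) whole_Z2 /\
      forall i, (i.+1 < k)%N ->
        ideal_ssub (scale_of G (jcomp E blk i.+1))
                   (scale_of G (jcomp E blk i))].

(* Type A (1-based t of the paper; components l_1..l_{t-1} are those with
   blk < t-1, l_t is jcomp t-1, l_{t-1} is jcomp t-2). *)
Definition typeA n (G : 'M[Z2]_n) : Prop :=
  exists (E : 'M[Z2]_n) (k : nat) (blk : 'I_n -> nat) (t : nat),
    [/\ jordan_decomp G E k blk,
        (0 < t <= k)%N,
        (* l_1 _|_ ... _|_ l_{t-1} is ternary ... *)
        #|[pred a | (blk a < t.-1)%N]| = 3%N,
        (forall x, span_of E [pred a | (blk a < t.-1)%N] x ->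
                   qform G x = 0 -> x = 0) &
        ideal_sub (norm_of G (jcomp E blk t.-1))
                  (ideal_scale 8%:R (scale_of G (jcomp E blk t.-2)))].

Definition SC2 : seq nat := [:: 1; 3; 5; 7; 2; 6; 10; 14]%N.

Definition represents_nat n (G : 'M[Z2]_n) (c : nat) : Prop :=
  exists x : 'rV[Z2]_n, qform G x = c%:R.

Definition is_nu2s n (G : 'M[Z2]_n) (s v : nat) : Prop :=
  exists u : nat,
    [/\ represents_nat G (s * 4 ^ u)%N,
        forall u', (u' < u)%N -> ~ represents_nat G (s * 4 ^ u')%N &
        v = logn 2 (s * 4 ^ u)].

Definition is_nu2 n (G : 'M[Z2]_n) (v : nat) : Prop :=
  (exists2 s, s \in SC2 & is_nu2s G s v) /\
  (forall s w, s \in SC2 -> is_nu2s G s w -> (w <= v)%N).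

(* If B(x,y) had 2-adic order w < nu_2(L) - 2 while Q(x) and Q(y) have order
   nu_2(L), then Q(x + mu y) = Q(x) + 2 mu B(x,y) + mu^2 Q(y) is 2^(w+1) times a
   quadratic polynomial in mu with odd linear coefficient and even leading
   coefficient; by Hensel's lemma it takes every value of 2^(w+1) Z_2.  But for
   s realising nu_2(L) = nu_{2,s}(L) = ord_2(s 4^u), the integer s 4^(u-1) lies in
   2^(w+1) Z_2 and is not represented by L, by minimality of u. *)
From HB Require Import structures.
From mathcomp Require Import all_boot all_order all_algebra.
From mathcomp Require Import zify ring.
Set Implicit Arguments.
Unset Strict Implicit.
Unset Printing Implicit Defensive.
Import GRing.Theory.
Local Open Scope ring_scope.

Lemma z2seq_nat m k : z2seq (m%:R : Z2) k = (m %% 2 ^ k)%N.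
Proof.
elim: m => [|m IH] //.
by rewrite mulrS /= IH modnDm.
Qed.

Lemma z2seq_modn (a : Z2) j i : (z2seq a (j + i) %% 2 ^ j)%N = z2seq a j.
Proof.
elim: i => [|i IH]; first by rewrite addn0 modn_small ?z2lt.
by rewrite addnS -(modn_dvdm _ (dvdn_exp2l 2 (leq_addr i j))) z2mod.
Qed.

Lemma in2powE k a : in2pow k a <-> z2seq a k = 0%N.
Proof.
split; first by case=> b ->; rewrite /= z2seq_nat modnn mul0n mod0n.
move=> ha.
have coh : coherent (fun j => z2seq a (j + k) %/ 2 ^ k)%N.
  move=> j; split; first by rewrite ltn_divLR ?expn2_gt0 // -expnD z2lt.
  by rewrite modn_divl -expnD addSn z2mod.
exists (MkZ2 coh); apply: Z2_ext => j.
have dvd_k : (2 ^ k %| z2seq a (j + k))%N by rewrite /dvdn addnC z2seq_modn ha.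
by rewrite /= z2seq_nat modnMml mulnC divnK // z2seq_modn.
Qed.

Lemma in2powP k a : reflect (in2pow k a) (z2seq a k == 0%N).
Proof. by apply: (iffP eqP) => /in2powE. Qed.

Lemma in2powW m k a : (m <= k)%N -> in2pow k a -> in2pow m a.
Proof.
move=> le_mk [b ->]; exists ((2 ^ (k - m))%N%:R * b).
by rewrite mulrA -natrM -expnD subnKC.
Qed.

Lemma in2pow1_subr1 b : ~ in2pow 1 b -> in2pow 1 (1 - b).
Proof.
rewrite !in2powE /= => hb.
by have := z2lt b 1; rewrite expn1 in hb *; case: (z2seq b 1) hb => [|[]].
Qed.

Lemma in2pow_ord k a : ~ in2pow k a ->
  exists w b, [/\ (w < k)%N, a = (2 ^ w)%N%:R * b & ~ in2pow 1 b].
Proof.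
move=> hk.
have [w [lt_wk [[b ->] nSw]]] : exists w, (w < k)%N /\ in2pow w a /\ ~ in2pow w.+1 a.
  elim: k hk => [|k IH] hk.
    by case: hk; exists a; rewrite expn0 mul1r.
  have [ak | nak] := in2powP k a; first by exists k.
  have [w [lt_wk hw]] := IH nak.
  by exists w; split=> //; apply: ltnW.
exists w, b; split=> // -[c bE]; apply: nSw; exists c.
by rewrite bE mulrA -natrM -expnSr.
Qed.

Definition eqmod2 k (a b : Z2) := z2seq a k = z2seq b k.

Lemma eqmod2_in2pow k a b : eqmod2 k a b <-> in2pow k (a - b).
Proof.
rewrite in2powE /eqmod2; split=> h.
  have -> : z2seq (a - b) k = z2seq (b - b) k by rewrite /= h.
  by rewrite subrr /= mod0n.
rewrite -[in LHS](subrK b a).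
change ((z2seq (a - b)%R k + z2seq b k) %% 2 ^ k = z2seq b k)%N.
by rewrite h add0n modn_small ?z2lt.
Qed.

Lemma z2_contraction_fixpoint (f : Z2 -> Z2) :
  (forall k a b, eqmod2 k a b -> eqmod2 k.+1 (f a) (f b)) -> exists mu, f mu = mu.
Proof.
move=> contr.
pose p k := iter k f 0.
have p_cauchy k : eqmod2 k (p k) (p k.+1).
  elim: k => [|k IH]; last exact: contr.
  by rewrite /eqmod2; have := z2lt (p 0%N) 0; have := z2lt (p 1%N) 0; rewrite expn0; lia.
have coh : coherent (fun k => z2seq (p k) k).
  by move=> k; split; [exact: z2lt | rewrite z2mod; symmetry; apply: p_cauchy].
exists (MkZ2 coh); apply: Z2_ext => -[|k].
  by have := z2lt (f (MkZ2 coh)) 0; have := z2lt (p 0%N) 0; rewrite expn0 /=; lia.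
exact: (contr k (MkZ2 coh) (p k)).
Qed.

Lemma quadratic_root_z2 (a b c : Z2) :
  ~ in2pow 1 b -> in2pow 1 c -> exists mu, a + b * mu + c * mu ^+ 2 = 0.
Proof.
move=> /in2pow1_subr1[b' b'E] [c' c'E].
pose f m := m - (a + b * m + c * m ^+ 2).
have [mu fmu] : exists mu, f mu = mu.
  apply: z2_contraction_fixpoint => k m1 m2 /eqmod2_in2pow[d dE].
  apply/eqmod2_in2pow; exists (d * (b' - c' * (m1 + m2))).
  have -> : f m1 - f m2 = (m1 - m2) * ((1 - b) - c * (m1 + m2)) by rewrite /f; ring.
  by rewrite dE b'E c'E (expnS 2 k) natrM; ring.
exists mu; have -> : a + b * mu + c * mu ^+ 2 = mu - f mu by rewrite /f; ring.
by rewrite fmu subrr.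
Qed.

Section BinaryForm.
Variables (n : nat) (G : 'M[Z2]_n).
Hypothesis G_sym : G^T = G.

Lemma bformDl x y z : bform G (x + y) z = bform G x z + bform G y z.
Proof. by rewrite /bform !mulmxDl mxE. Qed.

Lemma bformDr x y z : bform G x (y + z) = bform G x y + bform G x z.
Proof. by rewrite /bform linearD /= mulmxDr mxE. Qed.

Lemma bformZl c x z : bform G (c *: x) z = c * bform G x z.
Proof. by rewrite /bform -!scalemxAl mxE. Qed.

Lemma bformZr c x z : bform G x (c *: z) = c * bform G x z.
Proof. by rewrite /bform linearZ /= -!scalemxAr mxE. Qed.

Lemma bformC x y : bform G x y = bform G y x.
Proof.
rewrite /bform; transitivity ((x *m G *m y^T)^T 0 0); first by rewrite [RHS]mxE.
by rewrite !trmx_mul trmxK G_sym mulmxA.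
Qed.

Lemma qform_add_scale x y c :
  qform G (x + c *: y) = qform G x + 2 * c * bform G x y + c ^+ 2 * qform G y.
Proof.
rewrite /qform !(bformDl, bformDr, bformZl, bformZr) (bformC y x); ring.
Qed.

Lemma qform_onto_2pow x y w b :
  bform G x y = (2 ^ w)%N%:R * b -> ~ in2pow 1 b ->
  in2pow w.+2 (qform G x) -> in2pow w.+2 (qform G y) ->
  forall t, exists mu, qform G (x + mu *: y) = (2 ^ w.+1)%N%:R * t.
Proof.
move=> Bxy b_odd [a Qx] [c Qy] t.
have [mu root] := @quadratic_root_z2 (2 * a - t) b (2 * c) b_odd (ex_intro _ c erefl).
exists mu; apply/eqP; rewrite -subr_eq0 qform_add_scale Bxy Qx Qy.
rewrite !expnS !natrM; apply/eqP; rewrite -[RHS](mulr0 (2 * (2 ^ w)%N%:R)) -root.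
ring.
Qed.

End BinaryForm.

Lemma SC2_logn s : s \in SC2 -> (0 < s)%N /\ (logn 2 s <= 1)%N.
Proof.
move=> s_SC2.
by have /allP/(_ s s_SC2)/andP : all [pred s | (0 < s)%N && (logn 2 s <= 1)%N] SC2.
Qed.

Lemma is_nu2s_unrepresented n (G : 'M[Z2]_n) s v :
  s \in SC2 -> is_nu2s G s v -> (2 <= v)%N ->
  exists m, (2 ^ (v - 2) %| m)%N /\ ~ represents_nat G m.
Proof.
move=> /SC2_logn[s_gt0 logs] [u [_ min_u ->]].
rewrite lognM ?expn_gt0 // lognX => v_ge2.
have u_gt0 : (0 < u)%N by move: v_ge2; change (logn 2 4) with 2%N; lia.
exists (s * 4 ^ u.-1)%N; split; last by apply: min_u; rewrite prednK.
rewrite pfactor_dvdn ?muln_gt0 ?expn_gt0 ?s_gt0 // lognM ?expn_gt0 // !lognX.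
by change (logn 2 4) with 2%N; lia.
Qed.

Theorem lemma2p9 (n : nat) (G : 'M[Z2]_n) :
  (4 <= n)%N -> trmx G = G -> nondeg_form G -> primitive_lat G -> typeA G ->
  forall v : nat, is_nu2 G v ->
  forall x y : 'rV[Z2]_n,
    has_ord2 (qform G x) v -> has_ord2 (qform G y) v ->
    in2pow (v - 2)%N (bform G x y).
Proof.
move=> _ G_sym _ _ _ v [[s s_SC2 nu_s] _] x y [Qx _] [Qy _].
have [// | /in2pow_ord[w [b [lt_w Bxy b_odd]]]] := in2powP (v - 2) (bform G x y).
exfalso.
have [|m [dvd_m not_rep]] := is_nu2s_unrepresented s_SC2 nu_s; first by lia.
have dvd_wm : (2 ^ w.+1 %| m)%N.
  by apply: dvdn_trans dvd_m; apply: dvdn_exp2l; lia.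
have le_wv : (w.+2 <= v)%N by lia.
have [mu Qmu] := qform_onto_2pow G_sym Bxy b_odd
  (in2powW le_wv Qx) (in2powW le_wv Qy) (m %/ 2 ^ w.+1)%N%:R.
apply: not_rep; exists (x + mu *: y).
by rewrite Qmu -natrM mulnC divnK.
Qed.
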